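(* Let $k\in\mathbb{Z}$ with $|k|\ge 2$ and $z\in\mathbb{C}\setminus\{0\}$. Then $$|W_k'(z)| \le \frac{1}{|z|}\frac{(2|k|-2)\pi}{(2|k|-2)\pi-1} \le \frac{1}{|z|}\frac{2\pi}{2\pi-1} \le \frac{1.2}{|z|}.$$ Also, if $k=1$ and $\operatorname{Im}(z)\ge 0$, or if $k=-1$ and $\operatorname{Im}(z)<0$, then $$|W_k'(z)| \le \frac{1}{|z|}\frac{\pi}{\pi-1}\le\frac{1.5}{|z|}.$$
   Context: $W_k$ denotes the $k$-th branch of the Lambert $W$ function (inverse of $w\mapsto we^w$) in the standard convention of Corless, Gonnet, Hare, Jeffrey and Knuth (1996); branches with $|k|\ge2$ have a branch cut on $(-\infty,0)$, $W_{\pm1}$ have cuts on $(-\infty,0)$ and, on one side, $(-1/e,0)$; on a branch cut the value is defined by continuity from the upper half plane. $W_k'$ denotes the derivative of the fixed branch $W_k$ (on a cut, the derivative of the branch continued from above, i.e. the directional derivative along the cut), and $W'(z)=\frac{1}{z}\frac{W(z)}{1+W(z)}$. *)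

From HB Require Import structures.
From Stdlib Require Import ClassicalEpsilon.
From mathcomp Require Import all_boot all_order all_algebra.
From mathcomp Require Import complex.
From mathcomp Require Import all_classical all_reals all_analysis.
Set Implicit Arguments. Unset Strict Implicit. Unset Printing Implicit Defensive.
Import Order.TTheory GRing.Theory Num.Theory.
Local Open Scope ring_scope.
Local Open Scope complex_scope.

Section Lambert.
Variable R : realType.

Definition cexp (w : R[i]) : R[i] :=
  (expR (complex.Re w) * cos (complex.Im w)) +i* (expR (complex.Re w) * sin (complex.Im w)).

(* xi(eta) := - eta cot eta : the curves {xi(eta) + i eta} are the images of
   the negative real axis, i.e. the boundaries between branch ranges. *)
Definition bcurve (eta : R) : R := - eta * cos eta / sin eta.

(* Range of the branch W_k (Corless-Gonnet-Hare-Jeffrey-Knuth 1996), with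
   the convention that on branch cuts values are continuous from above
   (upper boundary curve included, lower one excluded). w = xi + i eta. *)
Definition W_range (k : int) (w : R[i]) : Prop :=
  let xi := complex.Re w in let eta := complex.Im w in
  let kR : R := k%:~R in
  if (0 < k)%R then
    [/\ (2 * kR - 2) * pi < eta < (2 * kR + 1) * pi,
        eta < (2 * kR - 1) * pi -> xi < bcurve eta &
        2 * kR * pi < eta -> bcurve eta <= xi]
  else if (k < 0)%R then
    [/\ ((2 * kR - 1) * pi < eta < (2 * kR + 2) * pi
           \/ (k = -1 /\ eta = 0 /\ xi <= -1)),
        eta < 2 * kR * pi -> bcurve eta < xi &
        (2 * kR + 1) * pi < eta < (2 * kR + 2) * pi -> xi <= bcurve eta]
  else
    [/\ - pi < eta < pi,
        eta < 0 -> bcurve eta < xi,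
        eta = 0 -> -1 <= xi &
        0 < eta -> bcurve eta <= xi].

Definition LambertW (k : int) (z : R[i]) : R[i] :=
  epsilon (inhabits 0) (fun w => w * cexp w = z /\ W_range k w).

Definition LambertW' (k : int) (z : R[i]) : R[i] :=
  z^-1 * (LambertW k z / (1 + LambertW k z)).

End Lambert.

(* If |Im w| >= A > 1 then |w| >= A and |1 + w| >= |w| - 1, so
   |w / (1 + w)| <= A / (A - 1); as W_k'(z) = z^-1 W_k(z) / (1 + W_k(z)), it is
   enough to bound |Im W_k(z)| from below.  The range of W_k, |k| >= 2, lies in
   |Im w| >= (2|k| - 2) pi.  For w = xi + i eta with sin eta <> 0 one has
   Im (w e^w) = e^xi (xi - bcurve eta) sin eta, so a point of the range of W_1
   with 0 < eta < pi, lying left of the curve xi = bcurve eta, is mapped into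
   Im z < 0; hence Im z >= 0 forces Im W_1(z) >= pi, and symmetrically for W_-1.
   Since W_k(z) is defined by choice, we also show that w e^w = z has a
   solution in the range of W_k: in polar form w = rho e^(i phi) the argument
   of w e^w is phi + eta, and for a prescribed argument c > pi its modulus
   runs from +oo to 0 as phi runs over (0, pi). *)

From Stdlib Require Import ClassicalEpsilon.
From mathcomp Require Import all_boot all_order all_algebra.
From mathcomp Require Import complex.
From mathcomp Require Import all_classical all_reals all_analysis.
From mathcomp Require Import ring lra.
Import Order.TTheory GRing.Theory Num.Theory.
Import numFieldNormedType.Exports.
Local Open Scope ring_scope.
Local Open Scope complex_scope.

Set Implicit Arguments.
Unset Strict Implicit.
Unset Printing Implicit Defensive.

Section Trigonometry.
Context {R : realType}.
Implicit Types x e : R.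

Lemma cos_three_halves_gt0 : 0 < cos (3 / 2 : R).
Proof.
have cvg_cos := @cvg_cos_coeff' R (3 / 2).
rewrite -(cvg_lim (@Rhausdorff R) cvg_cos).
apply: (@lt_trans _ _ (\sum_(0 <= i < 4) cos_coeff' (3 / 2 : R) i)).
  rewrite !big_nat_recr //= big_nil add0r /cos_coeff' -!exprnP !exprS !expr0 /=.
  rewrite (_ : (0.*2)`! = 1) // (_ : (1.*2)`! = 2) // (_ : (2.*2)`! = 24) //.
  rewrite (_ : (3.*2)`! = 720) //; lra.
(* the remaining terms of the series come in pairs of positive sum *)
apply: lt_sum_lim_series; first by move/cvgP in cvg_cos.
move=> d; rewrite /cos_coeff' -!exprnP.
set n := (4 + d.*2)%N.
have -> : (4 + d.*2.+1)%N = n.+1 by rewrite /n addnS.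
have -> : (-1 : R) ^+ n = 1 by rewrite -signr_odd /n oddD odd_double.
have -> : (-1 : R) ^+ n.+1 = -1 by rewrite -signr_odd /n /= oddD odd_double.
rewrite doubleS; set m := n.*2.
have m8 : (8 <= m)%N by rewrite /m /n doubleD.
clearbody m.
rewrite (factS m.+1) (factS m) !natrM (exprSr _ m.+1) (exprSr _ m).
set A := (3 / 2 : R) ^+ m; set F := (m`!)%:R; set a := (m.+2)%:R; set b := (m.+1)%:R.
have A0 : 0 < A by rewrite exprn_gt0.
have F0 : 0 < F by rewrite ltr0n fact_gt0.
have a10 : 10 <= a by rewrite (ler_nat R 10).
have b9 : 9 <= b by rewrite (ler_nat R 9).
have -> : 1 * A / F + -1 * (A * (3 / 2) * (3 / 2)) / (a * (b * F)) =
          (A / F) * (1 - (9 / 4) / (a * b)).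
  by field; rewrite ?gt_eqF //; lra.
rewrite mulr_gt0 ?divr_gt0 // subr_gt0 ltr_pdivrMr; nra.
Qed.

Lemma pi_ge3 : 3 <= (pi : R).
Proof.
have pi_ge2 := @pi_ge2 R.
have : cos (pi / 2) < cos (3 / 2 : R) by rewrite cos_pihalf cos_three_halves_gt0.
rewrite ltr_cos ?in_itv /=; [lra | apply/andP; lra | apply/andP; lra].
Qed.

Lemma sin_lt0_Npi0 x : - pi < x < 0 -> sin x < 0.
Proof.
move=> /andP[? ?]; rewrite -oppr_gt0 -sinN sin_gt0_pi //; apply/andP; lra.
Qed.

Lemma sin_le0_Npi0 x : - pi <= x <= 0 -> sin x <= 0.
Proof.
move=> /andP[? ?]; rewrite -oppr_ge0 -sinN sin_ge0_pi //; apply/andP; lra.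
Qed.

Lemma two_natr_pi n : 2 * n%:R * pi = pi *+ 2 *+ n :> R.
Proof. by rewrite -[pi *+ 2 *+ n]mulr_natr -mulr_natr; ring. Qed.

Lemma sinD2npi x n : sin (x + 2 * n%:R * pi) = sin x.
Proof. by rewrite two_natr_pi (periodicn (@sinD2pi R)). Qed.

Lemma cosD2npi x n : cos (x + 2 * n%:R * pi) = cos x.
Proof. by rewrite two_natr_pi (periodicn (@cosD2pi R)). Qed.

Lemma sin_gt0_2npi n x : 2 * n%:R * pi < x < (2 * n%:R + 1) * pi -> 0 < sin x.
Proof.
move=> /andP[? ?]; rewrite -(subrK (2 * n%:R * pi) x) sinD2npi.
by rewrite sin_gt0_pi //; apply/andP; lra.
Qed.

Lemma sinpiB x : sin (pi - x) = sin x.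
Proof. by rewrite sinB sinpi cospi; ring. Qed.

Lemma cospiB x : cos (pi - x) = - cos x.
Proof. by rewrite cosB sinpi cospi; ring. Qed.

Lemma small_angle_of_sin e : 0 < e <= 1 / 2 ->
  exists2 x, 0 < x < pi / 2 & sin x = e /\ 1 / 2 <= cos x.
Proof.
move=> /andP[e_gt0 e_le].
have pi2 := @pi_ge2 R.
have [] := @IVT R sin 0 (pi / 2) e ltac:(lra).
- by apply: continuous_subspaceT => y; exact: continuous_sin.
- by rewrite sin0 sin_pihalf ge_min le_max; apply/andP; split; apply/orP; [left|right]; lra.
move=> x; rewrite in_itv /= => /andP[x_ge0 x_le] sinx.
have x_gt0 : 0 < x.
  by rewrite lt_def x_ge0 andbT; apply/eqP => x0; move: sinx; rewrite x0 sin0; lra.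
have x_lt : x < pi / 2.
  by rewrite lt_def x_le andbT; apply/eqP => x_pi2; move: sinx; rewrite -x_pi2 sin_pihalf; lra.
exists x; first by apply/andP.
split => //.
have cos_gt0 : 0 < cos x by apply: cos_gt0_pihalf; apply/andP; lra.
have := cos2sin2 x; rewrite sinx; nra.
Qed.

End Trigonometry.

Section Complex.
Context {R : realType}.
Implicit Types (xi eta : R) (w z : R[i]).

Lemma mul_cexp xi eta : (xi +i* eta) * cexp (xi +i* eta) =
  (expR xi * (xi * cos eta - eta * sin eta)) +i* (expR xi * (xi * sin eta + eta * cos eta)).
Proof. by rewrite /cexp /=; congr (_ +i* _); ring. Qed.

Lemma bcurveN eta : bcurve (- eta) = bcurve eta.
Proof. by rewrite /bcurve cosN sinN invrN; ring. Qed.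

Lemma Im_mul_cexp_bcurve w : sin (complex.Im w) != 0 -> complex.Im (w * cexp w) =
  expR (complex.Re w) * ((complex.Re w - bcurve (complex.Im w)) * sin (complex.Im w)).
Proof. by case: w => xi eta; rewrite mul_cexp /bcurve /= => sin_neq0; field. Qed.

Lemma conjc_mul_cexp w : (w * cexp w)^* = w^* * cexp w^*.
Proof. by case: w => xi eta; rewrite /= !mul_cexp cosN sinN /=; congr (_ +i* _); ring. Qed.

Lemma normc_gt0 z : z != 0 -> 0 < Normc.normc z.
Proof.
move=> z_neq0; rewrite lt_def; apply/andP; split.
  by apply: contra z_neq0 => /eqP/Normc.eq0_normc ->.
by case: z {z_neq0} => a b; rewrite sqrtr_ge0.
Qed.

Lemma polar_form z : z != 0 -> exists2 th, - pi < th <= pi &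
  z = (Normc.normc z * cos th) +i* (Normc.normc z * sin th).
Proof.
case: z => x y /= z_neq0; set r := Num.sqrt _.
have r2 : r ^+ 2 = x ^+ 2 + y ^+ 2 by rewrite sqr_sqrtr // addr_ge0 ?sqr_ge0.
have r_gt0 : 0 < r := normc_gt0 z_neq0.
set u := x / r.
have u_itv : -1 <= u <= 1.
  have : `|x| <= r.
    rewrite -(ger0_norm (ltW r_gt0)) -ler_sqr ?normr_ge0 //.
    by rewrite !real_normK ?num_real // r2 lerDl sqr_ge0.
  by rewrite ler_norml => /andP[? ?]; rewrite ler_pdivlMr // ler_pdivrMr //; apply/andP; lra.
have [_ cos_acos] := acos_def u_itv.
have r_cos : r * cos (acos u) = x by rewrite cos_acos /u; field; rewrite gt_eqF.
have r_sin : r * sin (acos u) = `|y|.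
  suff -> : sin (acos u) = `|y| / r by field; rewrite gt_eqF.
  rewrite sin_acos // -(ger0_norm (ltW r_gt0)) -normf_div -sqrtr_sqr; congr Num.sqrt.
  by rewrite /u !expr_div_n r2; field; rewrite -r2 gt_eqF // exprn_gt0.
have acos_ge0 : 0 <= acos u := acos_ge0 u_itv.
have acos_le : acos u <= pi := acos_lepi u_itv.
have [y_ge0|y_lt0] := leP 0 y.
  exists (acos u); first by apply/andP; have := @pi_gt0 R; lra.
  by rewrite r_cos r_sin ger0_norm.
exists (- acos u); last by rewrite cosN sinN r_cos mulrN r_sin ltr0_norm // opprK.
apply/andP; split; last lra.
rewrite ltrN2 lt_def acos_le andbT; apply/eqP => acos_pi.
by move: r_sin; rewrite -acos_pi sinpi mulr0 => /esym/eqP; rewrite normr_eq0 lt_eqF.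
Qed.

Lemma normc_div1D_le w (A : R) : 1 < A -> A <= `|complex.Im w| ->
  Normc.normc (w / (1 + w)) <= A / (A - 1).
Proof.
move=> A_gt1 A_le.
have Im_le : `|complex.Im w| <= Normc.normc w.
  case: w A_le => a b /= _; rewrite -sqrtr_sqr ler_sqrt ?addr_ge0 ?sqr_ge0 //.
  by rewrite lerDr sqr_ge0.
have w_le : Normc.normc w <= Normc.normc (1 + w) + 1.
  by have := le_normcD (1 + w) (-1); rewrite normcN Normc.normc1 addrC addKr.
rewrite Normc.normcM Normc.normcV.
set n := Normc.normc w in Im_le w_le *; set m := Normc.normc (1 + w) in w_le *.
have m_gt0 : 0 < m by lra.
rewrite -/(n / m) ler_pdivrMr // mulrAC ler_pdivlMr; last lra.
nra.
Qed.

End Complex.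

Section Existence.
Context {R : realType}.
Implicit Types (c r phi : R).

(* With eta = c - phi and xi = eta cot phi, xi + i eta = (eta / sin phi) e^(i phi),
   so (xi + i eta) e^(xi + i eta) has argument c and modulus lambert_radius c phi. *)
Definition lambert_radius c phi : R :=
  (c - phi) / sin phi * expR ((c - phi) * cos phi / sin phi).

Lemma continuous_lambert_radius c phi : sin phi != 0 ->
  {for phi, continuous (lambert_radius c)}.
Proof.
move=> sin_neq0.
have inv_sin := continuousV sin_neq0 (@continuous_sin R phi).
have sub_c := continuousB (@cst_continuous _ _ c phi) (@cvg_id _ (nbhs phi)).
exact: continuousM (continuousM sub_c inv_sin) (continuous_comp
  (continuousM (continuousM sub_c (@continuous_cos R phi)) inv_sin) (@continuous_expR R _)).
Qed.

Lemma exists_lambert_radius_ge c r : pi < c -> 0 < r ->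
  exists2 phi, 0 < phi < pi / 2 & r <= lambert_radius c phi.
Proof.
move=> c_gt r_gt0; have pi3 := @pi_ge3 R.
have [phi phi_itv [sin_phi cos_phi]] := @small_angle_of_sin R (1 / (r + 2))
  ltac:(by rewrite divr_gt0 ?ler_pdivrMr /=; lra).
exists phi => //; move/andP: phi_itv => [? ?].
rewrite /lambert_radius sin_phi; set t := c - phi; set E := expR _.
have t_ge1 : 1 <= t by rewrite /t; lra.
have E_ge1 : 1 <= E.
  rewrite /E (le_trans _ (expR_ge1Dx _)) // lerDl.
  by rewrite !divr_ge0 //; [apply: mulr_ge0|]; lra.
have -> : t / (1 / (r + 2)) = t * (r + 2) by field; lra.
have : 0 <= t * (r + 2) * (E - 1) by apply: mulr_ge0; nra.
nra.
Qed.

Lemma exists_lambert_radius_le c r : pi < c -> 0 < r ->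
  exists2 phi, pi / 2 < phi < pi & lambert_radius c phi <= r.
Proof.
move=> c_gt r_gt0; have pi3 := @pi_ge3 R.
set t0 := c - pi; have t0_gt0 : 0 < t0 by rewrite /t0; lra.
(* at phi = pi - x with sin x = e, the bound expR y >= y ^ 2 / 2 for
   y = t cos x / e >= t0 / (2 e) gives lambert_radius c phi <= 8 c e / t0 ^ 2 *)
set d := r * t0 ^+ 2 / (8 * c).
have d_gt0 : 0 < d.
  by rewrite /d; apply: divr_gt0; [apply: mulr_gt0; rewrite ?exprn_gt0 | lra].
set e := d / (1 + 2 * d).
have e_le : e <= d by rewrite /e ler_pdivrMr; nra.
have e_gt0 : 0 < e by rewrite /e divr_gt0 //; lra.
have [x x_itv [sin_x cos_x]] := @small_angle_of_sin R e
  ltac:(by apply/andP; split; rewrite // /e ler_pdivrMr; lra).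
move/andP: x_itv => [? ?].
exists (pi - x); first by apply/andP; lra.
rewrite /lambert_radius sinpiB cospiB sin_x.
set t := c - (pi - x); set y := t * cos x / e.
have t_ge : t0 <= t by rewrite /t /t0; lra.
have t_le : t <= c by rewrite /t; lra.
have -> : t * - cos x / e = - y by rewrite /y; field; lra.
have ye : t0 / 2 <= y * e.
  have -> : y * e = t * cos x by rewrite /y; field; lra.
  nra.
have exp_ge : 1 + y ^+ 2 / 2 <= expR y.
  have := @expR_ge1Dxn R y 1%N; rewrite (_ : (2`!)%:R = 2 :> R) //; apply.
  have : 0 <= y * e by lra.
  by rewrite pmulr_lge0.
rewrite expRN -mulrA -invfM ler_pdivrMr; last by rewrite mulr_gt0 ?expR_gt0.
have dc : d * c = r * t0 ^+ 2 / 8 by rewrite /d; field; lra.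
suff : t * e <= r * e * (e * expR y) by move=> ?; nra.
have : t0 ^+ 2 / 4 <= (y * e) ^+ 2 by nra.
have : 0 <= r * e * e by nra.
nra.
Qed.

Lemma lambert_radius_onto c r : pi < c -> 0 < r ->
  exists2 phi, 0 < phi < pi & lambert_radius c phi = r.
Proof.
move=> c_gt r_gt0.
have [a /andP[? ?] r_le] := exists_lambert_radius_ge c_gt r_gt0.
have [b /andP[? ?] le_r] := exists_lambert_radius_le c_gt r_gt0.
have [] := @IVT R (lambert_radius c) a b r ltac:(lra).
- apply: continuous_in_subspaceT => x; rewrite inE /= in_itv /= => /andP[? ?].
  by apply: continuous_lambert_radius; rewrite gt_eqF // sin_gt0_pi //; apply/andP; lra.
- by rewrite ge_min le_max le_r r_le orbT.
by move=> phi; rewrite in_itv /= => /andP[? ?] <-; exists phi => //; apply/andP; lra.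
Qed.

Lemma exists_lambert_solution (c r : R) : pi < c -> 0 < r -> exists2 w : R[i],
  w * cexp w = (r * cos c) +i* (r * sin c) & c - pi < complex.Im w < c.
Proof.
move=> c_gt r_gt0; have [phi /andP[? ?] radius_r] := lambert_radius_onto c_gt r_gt0.
have sin_neq0 : sin phi != 0 by rewrite gt_eqF // sin_gt0_pi //; apply/andP.
set eta := c - phi; exists ((eta * cos phi / sin phi) +i* eta); last first.
  by rewrite /eta /=; apply/andP; lra.
rewrite mul_cexp -radius_r /lambert_radius -/eta.
have -> : c = phi + eta by rewrite /eta; ring.
by rewrite [sin (phi + eta)]sinD [cos (phi + eta)]cosD; congr (_ +i* _); field.
Qed.

Lemma exists_lambert_solution_on_branch (K : nat) (th r : R) :
  (0 < K)%N -> - pi <= th <= pi -> 0 < r -> pi < th + 2 * K%:R * pi ->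
  exists2 w : R[i], w * cexp w = (r * cos th) +i* (r * sin th) &
  let eta := complex.Im w in
  [/\ (2 * K%:R - 2) * pi < eta < (2 * K%:R + 1) * pi,
      eta < (2 * K%:R - 1) * pi ->
        complex.Re w <= bcurve eta /\ (- pi < th -> complex.Re w < bcurve eta) &
      2 * K%:R * pi < eta ->
        bcurve eta <= complex.Re w /\ (th < pi -> bcurve eta < complex.Re w)].
Proof.
case: K => [//|K] _ /andP[? ?] r_gt0 c_gt.
have [w sol /andP[? ?]] := exists_lambert_solution c_gt r_gt0.
rewrite cosD2npi sinD2npi in sol; exists w => //=.
set xi := complex.Re w; set eta := complex.Im w in sol *.
have KS : K.+1%:R = K%:R + 1 :> R by rewrite natr1.
have pi3 := @pi_ge3 R.
(* the side of the curve xi = bcurve eta is read off the sign of Im z = r sin th *)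
have side : 0 < sin eta -> expR xi * ((xi - bcurve eta) * sin eta) = r * sin th.
  by move=> sin_gt0; rewrite -Im_mul_cexp_bcurve ?sol // lt0r_neq0.
have E_gt0 := expR_gt0 xi.
have side_le : 0 < sin eta -> (xi <= bcurve eta) = (sin th <= 0).
  move=> sin_gt0; rewrite -subr_le0 -(pmulr_lle0 _ sin_gt0) -(pmulr_rle0 _ E_gt0).
  by rewrite side // pmulr_rle0.
have side_lt : 0 < sin eta -> (xi < bcurve eta) = (sin th < 0).
  move=> sin_gt0; rewrite -subr_lt0 -(pmulr_llt0 _ sin_gt0) -(pmulr_rlt0 _ E_gt0).
  by rewrite side // pmulr_rlt0.
split; first by apply/andP; lra.
- move=> eta_lt.
  have sin_gt0 : 0 < sin eta by apply: (@sin_gt0_2npi _ K); apply/andP; lra.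
  split; first by rewrite (side_le sin_gt0) sin_le0_Npi0 //; apply/andP; lra.
  by move=> ?; rewrite (side_lt sin_gt0) sin_lt0_Npi0 //; apply/andP; lra.
- move=> eta_gt.
  have sin_gt0 : 0 < sin eta by apply: (@sin_gt0_2npi _ K.+1); apply/andP; lra.
  split; first by rewrite leNgt (side_lt sin_gt0) -leNgt sin_ge0_pi //; apply/andP; lra.
  by move=> ?; rewrite ltNge (side_le sin_gt0) -ltNge sin_gt0_pi //; apply/andP; lra.
Qed.

Lemma exists_in_W_range (k : int) (z : R[i]) : z != 0 -> k != 0 ->
  (k = -1 -> complex.Im z < 0) -> exists w, w * cexp w = z /\ W_range k w.
Proof.
move=> z_neq0 k_neq0 Im_lt0.
have [th /andP[? ?] zE] := polar_form z_neq0; set r := Normc.normc z in zE.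
have r_gt0 : 0 < r := normc_gt0 z_neq0.
have pi3 := @pi_ge3 R.
case: k k_neq0 Im_lt0 => [K|n] k_neq0 Im_lt0; rewrite /W_range /=.
- have K_gt0 : (0 < K)%N by rewrite lt0n.
  have th_itv : - pi <= th <= pi by apply/andP; lra.
  have c_gt : pi < th + 2 * K%:R * pi.
    have : 0 <= (K%:R - 1) * pi :> R by rewrite mulr_ge0 ?pi_ge0 // subr_ge0 ler1n.
    lra.
  have [w sol [eta_itv below above]] := exists_lambert_solution_on_branch K_gt0 th_itv r_gt0 c_gt.
  exists w; split; first by rewrite sol zE.
  rewrite ltz_nat K_gt0; split => //.
  + by move=> /below [_]; apply; lra.
  + by move=> /above [].
- (* conjugate a solution on branch -k for the angle -th, so that a point of
     the cut is reached from above *)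
  change ((Negz n)%:~R : R) with (- n.+1%:R : R).
  have th_itv : - pi <= - th <= pi by apply/andP; lra.
  have c_gt : pi < - th + 2 * n.+1%:R * pi.
    have [n0|n_gt0] := posnP n.
      have th_lt : th < pi.
        rewrite lt_def; apply/andP; split; last lra.
        apply: contraTneq (Im_lt0 ltac:(by rewrite n0)) => pi_th.
        by rewrite zE -pi_th sinpi mulr0 ltxx.
      by rewrite n0; lra.
    have : 0 <= (n.+1%:R - 2) * pi :> R by rewrite mulr_ge0 ?pi_ge0 // subr_ge0 ler_nat.
    lra.
  have [w sol [eta_itv below above]] :=
    exists_lambert_solution_on_branch (ltn0Sn n) th_itv r_gt0 c_gt.
  exists w^*; split; first by rewrite -conjc_mul_cexp sol zE cosN sinN /= mulrN opprK.
  case: w {sol} eta_itv below above => xi eta /= /andP[? ?] below above.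
  split; first by left; apply/andP; lra.
  + by rewrite bcurveN => ?; apply: (above _).2; lra.
  + by rewrite bcurveN => /andP[? ?]; apply: (below _).1; lra.
Qed.

End Existence.

Section Bounds.
Context {R : realType}.
Implicit Types (k : int) (w z : R[i]).

Lemma LambertW_spec k z : z != 0 -> k != 0 -> (k = -1 -> complex.Im z < 0) ->
  LambertW k z * cexp (LambertW k z) = z /\ W_range k (LambertW k z).
Proof.
move=> z_neq0 k_neq0 Im_lt0; rewrite /LambertW.
exact: (epsilon_spec _ (fun w => _ /\ _) (exists_in_W_range z_neq0 k_neq0 Im_lt0)).
Qed.

Lemma W_range_Im_ge k w : (2 <= `|k|)%R -> W_range k w ->
  (2 * `|k|%:~R - 2) * pi <= `|complex.Im w|.
Proof.
rewrite /W_range; case: k => n k_ge2.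
- have -> : (0 < Posz n)%R by case: n k_ge2.
  by case=> /andP[eta_gt _] _ _; rewrite (le_trans (ltW eta_gt)) // ler_norm.
- change ((Negz n)%:~R : R) with (- n.+1%:R : R); change `|Negz n| with (Posz n.+1) in k_ge2 |- *.
  case=> [[/andP[_ eta_lt] | [n0]]] _ _; last by move: k_ge2; case: n n0.
  by rewrite ler_normr; apply/orP; right; lra.
Qed.

Lemma W_range1_Im_ge w : W_range 1 w -> 0 <= complex.Im (w * cexp w) ->
  pi <= `|complex.Im w|.
Proof.
rewrite /W_range /= mulr1z => -[/andP[eta_gt _] left_of_curve _] Im_ge0.
have eta_gt0 : 0 < complex.Im w by lra.
rewrite gtr0_norm // leNgt; apply/negP => eta_lt.
have sin_gt0 : 0 < sin (complex.Im w) by rewrite sin_gt0_pi //; apply/andP.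
move: Im_ge0; rewrite Im_mul_cexp_bcurve ?lt0r_neq0 // pmulr_rge0 ?expR_gt0 //.
by rewrite pmulr_lge0 // subr_ge0 leNgt left_of_curve //; lra.
Qed.

Lemma W_rangeN1_Im_ge w : W_range (-1) w -> complex.Im (w * cexp w) < 0 ->
  pi <= `|complex.Im w|.
Proof.
rewrite /W_range /= mulrN1z => -[eta_itv _ right_of_curve] Im_lt0.
have [eta_le | eta_gt] := leP (complex.Im w) (- pi).
  by rewrite ler_normr; apply/orP; right; lra.
case: eta_itv => [/andP[_ eta_lt0] | [_ [eta0 _]]]; last first.
  move: Im_lt0; case: w eta0 {eta_gt right_of_curve} => xi eta eta0.
  by rewrite mul_cexp /=; rewrite /= in eta0; rewrite eta0 sin0 cos0; lra.
have sin_lt0 : sin (complex.Im w) < 0 by rewrite sin_lt0_Npi0 //; apply/andP; lra.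
move: Im_lt0; rewrite Im_mul_cexp_bcurve ?ltr0_neq0 // pmulr_rlt0 ?expR_gt0 //.
by rewrite nmulr_llt0 // subr_gt0 ltNge right_of_curve //; apply/andP; lra.
Qed.

Lemma ler_div_subr1 (a b : R) : 1 < b -> b <= a -> a / (a - 1) <= b / (b - 1).
Proof.
move=> b_gt1 b_le; rewrite ler_pdivrMr; last lra.
rewrite mulrAC ler_pdivlMr; last lra.
nra.
Qed.

Lemma norm_LambertW'_le k z (A : R) : 1 < A -> A <= `|complex.Im (LambertW k z)| ->
  `|LambertW' k z| <= `|z|^-1 * (A / (A - 1))%:C.
Proof.
move=> A_gt1 A_le; rewrite normrM normfV ler_wpM2l ?invr_ge0 //.
by rewrite -[`|_ / _|]/((Normc.normc _)%:C) lecR normc_div1D_le.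
Qed.

End Bounds.

Theorem theorem3 (R : realType) :
  (forall (k : int) (z : R[i]), (2 <= `|k|)%R -> z != 0 ->
     let a : R := (2 * `|k|%:~R - 2) * pi in
     [/\ `|LambertW' k z| <= (`|z|)^-1 * (a / (a - 1))%:C,
         (`|z|)^-1 * (a / (a - 1))%:C <= (`|z|)^-1 * (2 * pi / (2 * pi - 1))%:C &
         (`|z|)^-1 * (2 * pi / (2 * pi - 1))%:C <= (`|z|)^-1 * (6 / 5)%:C])
  /\
  (forall (k : int) (z : R[i]), z != 0 ->
     ((k = 1 /\ 0 <= complex.Im z) \/ (k = -1 /\ complex.Im z < 0)) ->
     `|LambertW' k z| <= (`|z|)^-1 * (pi / (pi - 1))%:C
     /\ (`|z|)^-1 * (pi / (pi - 1))%:C <= (`|z|)^-1 * (3 / 2)%:C).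
Proof.
have pi3 := @pi_ge3 R.
have scale (z : R[i]) (a b : R) : a <= b -> `|z|^-1 * a%:C <= `|z|^-1 * b%:C.
  by move=> a_le; rewrite ler_wpM2l ?invr_ge0 // lecR.
split.
- move=> k z k_ge2 z_neq0 a.
  have k_neq0 : k != 0 by apply/eqP => k0; move: k_ge2; rewrite k0.
  have not_N1 : k = -1 -> complex.Im z < 0 by move=> kN1; move: k_ge2; rewrite kN1.
  have [_ Wk] := LambertW_spec z_neq0 k_neq0 not_N1.
  have a_ge : 2 * pi <= a.
    have : 2 <= `|k|%:~R :> R by move: k_ge2; rewrite -(ler_int R).
    by rewrite /a; nra.
  split; last by apply: scale; rewrite ler_pdivrMr; lra.
  + have Im_ge : a <= `|complex.Im (LambertW k z)| := W_range_Im_ge k_ge2 Wk.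
    by apply: norm_LambertW'_le Im_ge; lra.
  + by apply: scale; apply: ler_div_subr1; lra.
- move=> k z z_neq0 k_cases.
  have k_neq0 : k != 0 by case: k_cases => -[->].
  have Im_lt0 : k = -1 -> complex.Im z < 0 by case: k_cases => -[-> //].
  have [Wk_sol Wk] := LambertW_spec z_neq0 k_neq0 Im_lt0.
  split; last by apply: scale; rewrite ler_pdivrMr; lra.
  apply: norm_LambertW'_le; first lra.
  case: k_cases Wk_sol Wk => -[-> Im_z] Wk_sol Wk.
  + by apply: W_range1_Im_ge Wk _; rewrite Wk_sol.
  + by apply: W_rangeN1_Im_ge Wk _; rewrite Wk_sol.
Qed.
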